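(* If $X$ is a crowded submaximal (Tychonoff) space, then $B_1(X)$ is a Baire space.
   Context: A space is crowded if it is non-empty and has no isolated points; it is submaximal if every dense subset is open. $B_1(X)$ is the set of all Baire-one real-valued functions on $X$ (pointwise limits of sequences of continuous real-valued functions on $X$) with the topology of pointwise convergence. A space is Baire if every countable intersection of open dense subsets is dense. All spaces are assumed Tychonoff. *)

From HB Require Import structures.
From mathcomp Require Import all_boot all_order all_algebra.
From mathcomp Require Import all_classical all_reals all_analysis.
Set Implicit Arguments. Unset Strict Implicit. Unset Printing Implicit Defensive.
Import Order.TTheory GRing.Theory Num.Theory numFieldTopology.Exports numFieldNormedType.Exports.
Local Open Scope classical_set_scope.
Local Open Scope ring_scope.

Definition tychonoff_space (R : realType) (X : topologicalType) : Prop :=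
  accessible_space X /\
  forall (a : X) (B : set X), closed B -> ~ B a ->
    exists f : X -> R, continuous f /\ f a = 0 /\ (forall b, B b -> f b = 1).

Definition crowded (X : topologicalType) : Prop :=
  [set: X] !=set0 /\ forall x : X, ~ isolated [set: X] x.

Definition submaximal (X : topologicalType) : Prop :=
  forall D : set X, dense D -> open D.

Definition baire_one (R : realType) (X : topologicalType) (f : X -> R) : Prop :=
  exists fn : nat -> X -> R, (forall n, continuous (fn n)) /\
    forall x, fn n x @[n --> \oo] --> f x.

Definition B1 (R : realType) (X : topologicalType) : set {ptws X -> R} :=
  [set f | baire_one (f : X -> R)].

Definition rel_open (T : topologicalType) (A U : set T) : Prop :=
  exists V, open V /\ U = V `&` A.

Definition rel_dense (T : topologicalType) (A D : set T) : Prop :=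
  forall W : set T, open W -> W `&` A !=set0 -> W `&` (D `&` A) !=set0.

Definition baire_subspace (T : topologicalType) (A : set T) : Prop :=
  forall U : nat -> set T,
    (forall n, U n `<=` A /\ rel_open A (U n) /\ rel_dense A (U n)) ->
    rel_dense A (\bigcap_n U n).

(* B_1(X) is Baire as soon as every real function on a countable subset of X
   agrees there with some Baire-one function. Indeed, given open sets dense in
   B_1(X), one builds nested closed pointwise boxes, each inside the next dense
   open set, with radii tending to 0; they constrain only countably many
   coordinates, on which the centres converge, and a Baire-one function
   matching the limit there lies in every box.
   For the extension, let C = {c_n}. In a submaximal space C \ int C is closed
   and discrete, so complete regularity yields continuous bumps psi_n with
   psi_n(c_i) = 0 for i < n, psi_n(c_n) = 1, and psi_n(x) eventually 0 at each
   point; off C this is arranged by letting the closed supports of the psi_n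
   accumulate into closed sets meeting C only in {c_i | i < n}, on which later
   bumps vanish. The Newton interpolants
   S_(n+1) = S_n + (g(c_n) - S_n(c_n)) psi_n are then eventually constant at
   every point. Crowdedness is only used to know that X is nonempty. *)

From mathcomp Require Import all_boot all_order all_algebra.
From mathcomp Require Import all_classical all_reals all_analysis.
From mathcomp Require Import lra.
Import Order.TTheory GRing.Theory Num.Theory numFieldTopology.Exports numFieldNormedType.Exports.
Set Implicit Arguments. Unset Strict Implicit. Unset Printing Implicit Defensive.
Local Open Scope classical_set_scope.
Local Open Scope ring_scope.

Lemma dependent_choice_nat (T : Type) (x0 : T) (P : nat -> T -> T -> Prop) :
  (forall n x, exists y, P n x y) ->
  exists f : nat -> T, f 0%N = x0 /\ forall n, P n (f n) (f n.+1).
Proof.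
move=> total; have [next Pnext] := boolp.choice (fun p : nat * T => total p.1 p.2).
exists (fix f n := if n is m.+1 then next (m, f m) else x0).
by split => // n; exact: Pnext (n, _).
Qed.

Lemma enum_seq_family (T : eqType) (x0 : T) (F : nat -> seq T) :
  exists c : nat -> T, forall k x, x \in F k -> exists n, c n = x.
Proof.
exists (fun n => if @unpickle (nat * nat)%type n is Some (k, i)
                 then nth x0 (F k) i else x0).
by move=> k x xF; exists (pickle (k, index x (F k))); rewrite pickleK nth_index.
Qed.

Section PointwiseBoxes.
Variables (R : realType) (X : topologicalType).
Implicit Types (h : X -> R) (F L : seq X) (e r : R).

Definition ptws_box h F e : set {ptws X -> R} :=
  [set g | forall x, x \in F -> `|h x - g x| < e].

Definition ptws_cbox h F e : set {ptws X -> R} :=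
  [set g | forall x, x \in F -> `|h x - g x| <= e].

Lemma ptws_box_open h F e : open (ptws_box h F e).
Proof.
elim: F => [|a F IH].
  by rewrite (_ : ptws_box h [::] e = setT); [exact: openT | apply/seteqP; split].
have -> : ptws_box h (a :: F) e =
    @proj X (fun=> R) a @^-1` ball (h a) e `&` ptws_box h F e.
  apply/seteqP; split => g /=.
    move=> hg; split; first by rewrite -ball_normE; apply: hg; rewrite inE eqxx.
    by move=> x xF; apply: hg; rewrite inE xF orbT.
  rewrite -ball_normE => -[ga gF] x; rewrite inE => /predU1P[->|]; [exact: ga | exact: gF].
apply: openI => //; apply: open_comp; last exact: ball_open.
by move=> g _; exact: proj_continuous.
Qed.

Lemma ptws_box_sub_cbox h F e : ptws_box h F e `<=` ptws_cbox h F e.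
Proof. by move=> g hg x /hg/ltW. Qed.

Lemma ptws_cbox_center h F e : 0 <= e -> ptws_cbox h F e h.
Proof. by move=> e_ge0 x _; rewrite subrr normr0. Qed.

Lemma nbhs_ptws_box (f : {ptws X -> R}) (O : set {ptws X -> R}) :
  nbhs f O -> exists F e, 0 < e /\ ptws_box f F e `<=` O.
Proof.
pose B := filter_from [set p : seq X * R | 0 < p.2] (fun p => ptws_box f p.1 p.2).
have B_filter : Filter B.
  apply: filter_from_filter; first by exists ([::], 1) => /=.
  move=> [F1 e1] [F2 e2] /= e1_gt0 e2_gt0.
  exists (F1 ++ F2, Num.min e1 e2); first by rewrite /= lt_min e1_gt0 e2_gt0.
  move=> g /= hg; split => x xF.
    by have := hg x; rewrite mem_cat xF lt_min => /(_ isT)/andP[].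
  by have := hg x; rewrite mem_cat xF orbT lt_min => /(_ isT)/andP[].
have : {ptws, B --> f}.
  apply/pointwise_cvgP => t A /nbhs_ballP[e /= e_gt0 Ae].
  exists ([:: t], e) => // g /= hg; apply: Ae.
  by rewrite -ball_normE; apply: hg; rewrite inE.
by move=> /(_ O)/[apply] -[[F e] /= e_gt0 sub]; exists F, e.
Qed.

Lemma nbhs_ptws_cbox (f : {ptws X -> R}) (O : set {ptws X -> R}) L r :
  nbhs f O -> 0 < r ->
  exists F e, [/\ 0 < e <= r, {subset L <= F} & ptws_cbox f F e `<=` O].
Proof.
move=> /nbhs_ptws_box[F [d [d_gt0 sub]]] r_gt0.
exists (L ++ F), (Num.min (d / 2) r); split.
- by rewrite lt_min ge_min lexx orbT r_gt0 andbT; lra.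
- by move=> x xL; rewrite mem_cat xL.
- move=> g hg; apply: sub => x xF.
  have := hg x; rewrite mem_cat xF orbT => /(_ isT).
  have : Num.min (d / 2) r <= d / 2 by rewrite ge_min lexx.
  lra.
Qed.

End PointwiseBoxes.

Section BaireFromInterpolation.
Variables (R : realType) (X : topologicalType).

Definition countably_interpolating (Y : set {ptws X -> R}) : Prop :=
  forall (c : nat -> X) (g : X -> R),
    exists2 f : {ptws X -> R}, Y f & forall n, f (c n) = g (c n).

Lemma nested_ptws_cboxes_meet (h : nat -> X -> R) (F : nat -> seq X) (e : nat -> R) :
  (forall k, 0 < e k <= k.+1%:R^-1) -> (forall k, {subset F k <= F k.+1}) ->
  (forall k, ptws_cbox (h k.+1) (F k.+1) (e k.+1) `<=` ptws_cbox (h k) (F k) (e k)) ->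
  exists g : {ptws X -> R}, forall k, ptws_cbox (h k) (F k) (e k) g.
Proof.
move=> e_bnd F_incr cbox_decr.
have F_mono k j : (k <= j)%N -> {subset F k <= F j}.
  apply: (@homo_leq _ F (fun s t => {subset s <= t})) => [s x //|s2 s1 s3 + + x|//].
  by move=> s12 s23 /s12/s23.
have cbox_mono k j : (k <= j)%N ->
    ptws_cbox (h j) (F j) (e j) `<=` ptws_cbox (h k) (F k) (e k).
  apply: (@homo_leq _ (fun k => ptws_cbox (h k) (F k) (e k)) (fun A B => B `<=` A)).
  - by move=> A.
  - by move=> B A C BA CB; exact: subset_trans CB BA.
  - exact: cbox_decr.
have h_in k j : (k <= j)%N -> ptws_cbox (h k) (F k) (e k) (h j).
  by move=> /cbox_mono; apply; apply/ptws_cbox_center/ltW; case/andP: (e_bnd j).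
have h_cvg k x : x \in F k -> cvg (h n x @[n --> \oo]).
  move=> xF; apply: cauchy_cvg; apply: cauchy_exP => eps eps_gt0.
  have [N _ N_lt] := near_infty_natSinv_lt (PosNum eps_gt0).
  exists (h (maxn N k) x), (maxn N k) => // n /= /h_in hn.
  rewrite -ball_normE /=; apply: le_lt_trans (hn x _) _.
    exact/(F_mono k)/xF/leq_maxr.
  apply: le_lt_trans (N_lt _ (leq_maxl N k)).
  by case/andP: (e_bnd (maxn N k)).
exists (fun x => lim (h n x @[n --> \oo])) => k x xF.
have closed_nbhs : closed [set v : R | `|h k x - v| <= e k].
  have [e_gt0 _] := andP (e_bnd k).
  by have := @closed_ball_closed _ _ (h k x) (e k); rewrite closed_ballE.
apply: (closed_cvg _ closed_nbhs _ _ (h_cvg k x xF)).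
by exists k => // j /h_in; apply.
Qed.

Lemma nested_ptws_cboxes (Y W : set {ptws X -> R}) (O : nat -> set {ptws X -> R}) :
  (forall k, open (O k)) ->
  (forall k G, open G -> G `&` Y !=set0 -> G `&` O k `&` Y !=set0) ->
  open W -> W `&` Y !=set0 ->
  exists (h : nat -> X -> R) (F : nat -> seq X) (e : nat -> R),
  [/\ forall k, 0 < e k <= k.+1%:R^-1, forall k, {subset F k <= F k.+1},
      ptws_cbox (h 0%N) (F 0%N) (e 0%N) `<=` W,
      forall k, ptws_cbox (h k) (F k) (e k) `<=` O k &
      forall k, ptws_cbox (h k.+1) (F k.+1) (e k.+1) `<=` ptws_cbox (h k) (F k) (e k)].
Proof.
move=> oO O_dense oW WY.
have shrink k G (L : seq X) : open G -> G `&` Y !=set0 -> exists (h : {ptws X -> R}) F e,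
    [/\ Y h, 0 < e <= k.+1%:R^-1, {subset L <= F} & ptws_cbox h F e `<=` G `&` O k].
  move=> oG /(O_dense k G oG)[h [GOh Yh]].
  have hGO : nbhs h (G `&` O k) by apply: open_nbhs_nbhs; split => //; exact: openI.
  have [|F [e [e_bnd LF sub]]] := nbhs_ptws_cbox L hGO (r := k.+1%:R^-1).
    by rewrite invr_gt0.
  by exists h, F, e.
pose T := {s : {ptws X -> R} * seq X * R | Y s.1.1 /\ 0 < s.2}.
pose center (s : T) := (sval s).1.1.
pose support (s : T) := (sval s).1.2.
pose radius (s : T) := (sval s).2.
pose cbox (s : T) := ptws_cbox (center s) (support s) (radius s).
have [h0 [F0 [e0 [Yh0 /andP[e0_gt0 e0_le] _ sub0]]]] := shrink 0%N W [::] oW WY.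
have /(dependent_choice_nat (exist _ (h0, F0, e0) (conj Yh0 e0_gt0)))[s [s0 s_next]] :
    forall k (t : T), exists t' : T, [/\ radius t' <= k.+2%:R^-1,
      {subset support t <= support t'} & cbox t' `<=` cbox t `&` O k.+1].
  move=> k [[[h F] e] [Yh e_gt0]].
  have hY : ptws_box h F e `&` Y !=set0.
    by exists h; split => // x _; rewrite subrr normr0.
  have [h' [F' [e' [Yh' /andP[e'_gt0 e'_le] FF' sub]]]] :=
    shrink k.+1 _ F (ptws_box_open h F e) hY.
  exists (exist _ (h', F', e') (conj Yh' e'_gt0)); split => //.
  by move=> g /sub[/ptws_box_sub_cbox].
exists (center \o s), (support \o s), (radius \o s); split.
- move=> k; rewrite /= (proj2 (svalP (s k))) /=.
  by case: k => [|k]; [rewrite s0 | case: (s_next k)].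
- by move=> k; case: (s_next k).
- by rewrite /= s0 => g /sub0[].
- by case=> [|k] g; [rewrite /= s0 => /sub0[] | case: (s_next k) => _ _ /[apply] -[]].
- by move=> k g; case: (s_next k) => _ _ /[apply] -[].
Qed.

Lemma interpolating_baire_subspace (x0 : X) (Y : set {ptws X -> R}) :
  countably_interpolating Y -> baire_subspace Y.
Proof.
move=> interp U U_odense W oW WY.
have [V V_def] := boolp.choice (fun n => (U_odense n).2.1).
have V_dense k G : open G -> G `&` Y !=set0 -> G `&` V k `&` Y !=set0.
  move=> oG /((U_odense k).2.2 G oG)[f [Gf [+ Yf]]].
  by rewrite (V_def k).2 => -[Okf _]; exists f.
have [h [F [e [e_bnd F_incr cboxW cboxV cbox_decr]]]] :=
  nested_ptws_cboxes (fun k => (V_def k).1) V_dense oW WY.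
have [g g_in] := nested_ptws_cboxes_meet e_bnd F_incr cbox_decr.
have [c c_onto] := enum_seq_family x0 F.
have [f Yf fg] := interp c g.
have f_in k : ptws_cbox (h k) (F k) (e k) f.
  move=> x xF; have [n cn] := c_onto k x xF.
  by rewrite -cn fg cn; exact: g_in.
exists f; split; first exact/cboxW/f_in.
by split=> // n _; rewrite (V_def n).2; split=> //; exact/cboxV/f_in.
Qed.

End BaireFromInterpolation.

Section NewtonInterpolation.
Variables (R : realType) (X : topologicalType) (c : nat -> X).

Definition newton_basis (psi : nat -> X -> R) : Prop :=
  [/\ forall n, continuous (psi n),
      forall n i, (i < n)%N -> psi n (c i) = 0,
      forall n, (forall i, (i < n)%N -> c i <> c n) -> psi n (c n) = 1 &
      forall x, \forall n \near \oo, psi n x = 0].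

Lemma newton_interpolation (psi : nat -> X -> R) (g : X -> R) : newton_basis psi ->
  exists f : X -> R, baire_one f /\ forall n, f (c n) = g (c n).
Proof.
move=> [psi_cont psi_old psi_new psi_ev0].
pose S := fix S n : X -> R :=
  if n is m.+1 then fun x => S m x + (g (c m) - S m (c m)) * psi m x else fun=> 0.
have S_cont n : continuous (S n).
  elim: n => [|n IH] x /=; first exact: cst_continuous.
  apply: continuousD; first exact: IH.
  by apply: continuousM; [exact: cst_continuous | exact: psi_cont].
have S_interp N m : (m < N)%N -> S N (c m) = g (c m).
  elim: N m => [//|N IH] m; rewrite ltnS leq_eqVlt => /predU1P[->|mN] /=; last first.
    by rewrite psi_old // mulr0 addr0 IH.
  have [[i iN <-]|new] := pselect (exists2 i, (i < N)%N & c i = c N).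
    by rewrite IH // subrr mul0r addr0.
  rewrite psi_new => [|i iN ciN]; last by apply: new; exists i.
  by rewrite mulr1 addrC subrK.
have /boolp.choice[M S_stable] : forall x, exists M, forall n, (M <= n)%N -> S n x = S M x.
  move=> x; have [M _ psi0] := psi_ev0 x; exists M => n /subnK <-.
  elim: (n - M)%N => [//|k IH]; rewrite addSn /= IH psi0 ?mulr0 ?addr0 //=.
  exact: leq_addl.
exists (fun x => S (M x) x); split.
  exists S; split => // x; apply: cvg_near_cst.
  by exists (M x) => // n /= /S_stable.
move=> n /=; rewrite -(S_stable (c n) (maxn (M (c n)) n.+1)) ?leq_maxl //.
exact/S_interp/leq_maxr.
Qed.

End NewtonInterpolation.

Section SubmaximalNewtonBasis.
Variables (R : realType) (X : topologicalType).

Lemma submaximal_closed_subset (sm : submaximal X) (C E : set X) :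
  E `<=` C `\` C° -> closed E.
Proof.
move=> EC; rewrite -openC; apply: sm => O [y Oy] oO.
apply: contrapT => nOE.
have OE : O `<=` E by move=> z Oz; apply: contrapT => nEz; apply: nOE; exists z.
have : O `<=` C° by rewrite -open_subsetE // => z /OE/EC[].
by have [_ nIy] := EC y (OE y Oy); move/(_ y Oy).
Qed.

Lemma tychonoff_bump (tych : tychonoff_space R X) (K : set X) (a : X) :
  closed K -> ~ K a ->
  exists (psi : X -> R) (S : set X),
    [/\ continuous psi, psi a = 1, closed S, S `&` K = set0 &
         forall x, ~ S x -> psi x = 0].
Proof.
move=> K_closed nKa; have [phi [phi_cont [phi_a phi_K]]] := tych.2 a K K_closed nKa.
exists (fun x => Num.max 0 (1 - 2 * phi x)), (phi @^-1` [set z | z <= 2^-1]); split.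
- move=> x; apply: (@continuous_max _ _ (fun=> 0) (fun x => 1 - 2 * phi x)).
    exact: cst_continuous.
  apply: continuousB; first exact: cst_continuous.
  by apply: continuousM; [exact: cst_continuous | exact: phi_cont].
- by rewrite phi_a mulr0 subr0 max_r ?ler01.
- apply: preimage_closed; last exact: closed_le.
  by move=> x _; exact: phi_cont.
- apply/seteqP; split => // x [Sx /phi_K phi1].
  by move: Sx; rewrite /= phi1; lra.
- by move=> x /negP; rewrite -ltNge /= => phix; rewrite max_l //; lra.
Qed.

Section Construction.
Hypotheses (tych : tychonoff_space R X) (sm : submaximal X).
Variable c : nat -> X.

Let C := range c.
Let Fin n := c @` `I_n.
Let admissible n (A : set X) := closed A /\ A `&` C `<=` Fin n.
Let basis_step n (A A' : set X) (psi : X -> R) :=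
  [/\ continuous psi, forall x, (Fin n `|` A) x -> psi x = 0,
      (forall i, (i < n)%N -> c i <> c n) -> psi (c n) = 1,
      A `<=` A' & forall x, ~ C x -> ~ A' x -> psi x = 0].

Let Fin_closed n : closed (Fin n).
Proof.
by apply: (@accessible_finite_set_closed X).1 tych.1 _ _; exact/finite_image.
Qed.

Let Fin_subS n : Fin n `<=` Fin n.+1.
Proof. by move=> _ [i iN <-]; exists i => //; exact: ltnW. Qed.

Let basis_step_exists n A : admissible n A ->
  exists A', admissible n.+1 A' /\ exists psi, basis_step n A A' psi.
Proof.
move=> [A_closed AC].
have [[i iN ciN]|new] := pselect (exists2 i, (i < n)%N & c i = c n).
  exists A; split; first by split=> // x /AC/Fin_subS.
  exists (fun=> 0); split => //; first by move=> x; exact: cst_continuous.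
  by move=> /(_ i iN).
pose K := A `|` (C `\` C° `\ c n) `|` Fin n.
have K_closed : closed K.
  apply: closedU; last exact: Fin_closed.
  apply: closedU; first exact: A_closed.
  by apply: (submaximal_closed_subset sm (C := C)) => x [].
have nKcn : ~ K (c n).
  have Ccn : C (c n) by exists n.
  case=> [[Acn|[_ /(_ erefl)//]]|Fcn].
    by have [i iN ciN] := AC _ (conj Acn Ccn); apply: new; exists i.
  by have [i iN ciN] := Fcn; apply: new; exists i.
have [psi [S [psi_cont psi_cn S_closed SK psi_offS]]] := tychonoff_bump tych K_closed nKcn.
have psi_K x : K x -> psi x = 0.
  by move=> Kx; apply: psi_offS => Sx; have : (S `&` K) x by []; rewrite SK.
(* Cutting out int C keeps the new set closed and makes it meet C only in
   C \ int C, where S avoids every point but c n. *)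
exists (A `|` (S `&` ~` C°)); split; [split|].
- apply: closedU; first exact: A_closed.
  by apply: closedI; [exact: S_closed | exact/open_closedC/open_interior].
- move=> x [[Ax|[Sx nIx]] Cx]; first by apply/Fin_subS/AC; split.
  have [->|xn] := pselect (x = c n); first by exists n => /=.
  have : (S `&` K) x by split=> //; left; right; split.
  by rewrite SK.
- exists psi; split => //.
  + by move=> x [Fx|Ax]; apply: psi_K; [right | left; left].
  + move=> x nCx nA'x; apply: psi_offS => Sx; apply: nA'x; right; split => //.
    by move/interior_subset.
Qed.

Lemma submaximal_newton_basis : exists psi : nat -> X -> R, newton_basis c psi.
Proof.
have /(dependent_choice_nat set0)[A [A0 A_next]] : forall n (A : set X), exists A',
    admissible n A -> admissible n.+1 A' /\ exists psi, basis_step n A A' psi.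
  move=> n A; have [/basis_step_exists[A' ?]|nadm] := pselect (admissible n A).
    by exists A'.
  by exists A => /nadm.
have A_adm n : admissible n (A n).
  elim: n => [|n IH]; last exact: (A_next n IH).1.
  by rewrite A0; split; [exact: closed0 | move=> x []].
have /boolp.choice[psi psi_step] : forall n, exists psi, basis_step n (A n) (A n.+1) psi.
  by move=> n; exact: (A_next n (A_adm n)).2.
have A_mono m n : (m <= n)%N -> A m `<=` A n.
  apply: (@homo_leq _ A (fun B B' => B `<=` B')) => [B x //|B B' B'' + + x|k].
    by move=> BB' B'B'' /BB'/B'B''.
  by case: (psi_step k).
exists psi; split.
- by move=> n; case: (psi_step n).
- by move=> n i iN; case: (psi_step n) => _ psi0 _ _ _; apply: psi0; left; exists i.
- by move=> n; case: (psi_step n).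
move=> x; have [[j _ <-]|nCx] := pselect (C x).
  exists j.+1 => // n /= jn; case: (psi_step n) => _ psi0 _ _ _.
  by apply: psi0; left; exists j.
have [[m Amx]|nA] := pselect (exists m, A m x).
  exists m => // n /= mn; case: (psi_step n) => _ psi0 _ _ _.
  by apply: psi0; right; exact: A_mono Amx.
exists 0%N => // n _; case: (psi_step n) => _ _ _ _ -> // Ax.
by apply: nA; exists n.+1.
Qed.

End Construction.

End SubmaximalNewtonBasis.

Theorem mainTheorem5 (R : realType) (X : topologicalType) :
  tychonoff_space R X -> crowded X -> submaximal X ->
  baire_subspace (@B1 R X).
Proof.
move=> tych [[x0 _] _] sm.
apply: (interpolating_baire_subspace x0) => c g.
have [psi psi_basis] := submaximal_newton_basis tych sm c.
have [f [f_baire fg]] := newton_interpolation g psi_basis.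
by exists f.
Qed.
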